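(* Let $F$ be quadratic and assume (A1), (A2). Let $\mathbf C=1$ for \texttt{MCM} and $\mathbf C=N$ for \texttt{Rand-MCM} (as in the context). Then for any $k\ge1$, $$\mathbb{E}\Big[\Big\|\frac1N\sum_{i=1}^N\nabla F(\widehat w^i_{k-1})-\nabla F(w_{k-1})\Big\|^2\,\Big|\,w_{k-1}\Big]\le\frac{L^2\omega_{\mathrm{dwn}}}{\mathbf C}\cdot\frac1N\sum_{i=1}^N\|w_{k-1}-H^i_{k-2}\|^2.$$
   Context: $N\ge1$ homogeneous workers, objective $F:\mathbb{R}^d\to\mathbb{R}$. $F$ is quadratic: there are a symmetric matrix $A$ and a point $w_*$ with $F(w)-F(w_* )=\frac12(w-w_* )^\top A(w-w_* )$. Worker $i$ at iteration $k$ has an oracle $g_k^i$ with $\mathbb{E}[g_k^i(w)]=\nabla F(w)$; all compressions use fresh independent randomness. \texttt{Rand-MCM} with step $\gamma$, rate $\alpha_{\mathrm{dwn}}$: $H^i_{-1}=w_0$, $\widehat w_0^i=w_0$; for $k\ge1$: $w_k=w_{k-1}-\gamma\frac1N\sum_i\mathcal{C}_{\mathrm{up}}(g_k^i(\widehat w^i_{k-1}))$, $\widehat w^i_k=H^i_{k-1}+\mathcal{C}_{\mathrm{dwn},i}(w_k-H^i_{k-1})$, $H^i_k=H^i_{k-1}+\alpha_{\mathrm{dwn}}\mathcal{C}_{\mathrm{dwn},i}(w_k-H^i_{k-1})$ (same realization), with $\mathcal{C}_{\mathrm{dwn},1},\dots,\mathcal{C}_{\mathrm{dwn},N}$ mutually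 independent. \texttt{MCM} is the same with a single shared memory $H_k^i=H_k$ and a single downlink compression shared by all workers, so $\widehat w^i_k=\widehat w_k$ for all $i$. $\mathbb{E}[\cdot\mid w_{k-1}]$ is the conditional expectation given all randomness up to the computation of $w_{k-1}$ (so $H^i_{k-2}$ is measurable). (A1) for some $\omega_{\mathrm{up}},\omega_{\mathrm{dwn}}>0$, all $w$: unbiased compressions with $\mathbb{E}\|\mathcal{C}(w)-w\|^2\le\omega\|w\|^2$ for the respective $\omega$. (A2) $F$ is $L$-smooth. *)

From HB Require Import structures.
From mathcomp Require Import all_boot all_order all_algebra.
From mathcomp Require Import all_classical all_reals all_analysis.
Set Implicit Arguments. Unset Strict Implicit. Unset Printing Implicit Defensive.
Import Order.TTheory GRing.Theory Num.Theory.
Import numFieldNormedType.Exports.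
Local Open Scope classical_set_scope.
Local Open Scope ring_scope.

Definition sqnorm (R : realType) (d : nat) (v : 'cV[R]_d) : R :=
  \sum_(j < d) (v j ord0) ^+ 2.

Definition grad (R : realType) (d : nat) (F : 'cV[R]_d -> R) (w : 'cV[R]_d)
  : 'cV[R]_d :=
  \col_(j < d) derive F w (delta_mx j ord0).

Definition L_smooth (R : realType) (d : nat) (F : 'cV[R]_d -> R) (L : R) :=
  forall x y, Num.sqrt (sqnorm (grad F x - grad F y)) <= L * Num.sqrt (sqnorm (x - y)).

Definition quadratic_obj (R : realType) (d : nat) (F : 'cV[R]_d -> R)
  (A : 'M[R]_d) (wstar : 'cV[R]_d) :=
  A^T = A /\
  forall w, F w - F wstar = 2^-1 * ((w - wstar)^T *m A *m (w - wstar)) ord0 ord0.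

Definition compressor (R : realType) (dT : measure_display) (T : measurableType dT)
  (P : probability T R) (d : nat) (C : T -> 'cV[R]_d -> 'cV[R]_d) (omega : R) :=
  [/\ (forall x j, measurable_fun setT (fun t => C t x j ord0)),
      (forall x j, (\int[P]_t (C t x j ord0)%:E = (x j ord0)%:E)%E) &
      (forall x, (\int[P]_t (sqnorm (C t x - x))%:E <= (omega * sqnorm x)%:E)%E)].

(* Mutual independence of the random vectors X_1, ..., X_N in R^d: product
   rule on every finite subfamily, for the generating pi-system of events
   {X_i in B_i1 x ... x B_id} (B_ij Borel sets). *)
Definition indep_vecs (R : realType) (dT : measure_display) (T : measurableType dT)
  (P : probability T R) (N d : nat) (X : 'I_N -> T -> 'cV[R]_d) :=
  forall (I : {set 'I_N}) (B : 'I_N -> 'I_d -> set R),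
    (forall i j, measurable (B i j)) ->
    P (\bigcap_(i in [set i | i \in I]) [set t | forall j, B i j (X i t j ord0)])
    = (\prod_(i in I) P [set t | forall j, B i j (X i t j ord0)])%E.

Definition indep_compressors (R : realType) (dT : measure_display)
  (T : measurableType dT) (P : probability T R) (N d : nat)
  (C : 'I_N -> T -> 'cV[R]_d -> 'cV[R]_d) :=
  forall x : 'I_N -> 'cV[R]_d, indep_vecs P (fun i t => C i t (x i)).

(* For a quadratic objective the gradient is affine, grad F w = A (w - w_* ),
   so the averaged gradient error is A applied to the average of the
   compression errors C(x) - x, and L-smoothness says that |A y| <= L |y|.
   With one shared compression all N errors coincide and the bound is L^2
   times the variance bound omega |x|^2.  With independent compressions the
   errors are centred and independent, hence orthogonal in L^2: the second
   moment of their sum is the sum of their second moments, and the factor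
   1/N^2 in front of that sum produces the extra 1/N. *)

From HB Require Import structures.
From mathcomp Require Import all_boot all_order all_algebra.
From mathcomp Require Import all_classical all_reals all_analysis.
From mathcomp Require Import measurable_realfun.
From mathcomp Require Import ring lra.
Import Order.TTheory GRing.Theory Num.Theory.
Import numFieldNormedType.Exports.
Local Open Scope classical_set_scope.
Local Open Scope ring_scope.
Set Implicit Arguments. Unset Strict Implicit. Unset Printing Implicit Defensive.

Section quadratic_objective.
Variables (R : realType) (d : nat).
Implicit Types (A : 'M[R]_d) (u v w : 'cV[R]_d).

Definition mxform A u v : R := (u^T *m A *m v) ord0 ord0.

Lemma mxformC A u v : A^T = A -> mxform A u v = mxform A v u.
Proof.
move=> AT; rewrite /mxform.
transitivity ((u^T *m A *m v)^T ord0 ord0); first by rewrite [in RHS]mxE.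
by rewrite !trmx_mul trmxK AT mulmxA.
Qed.

Lemma mxform_shift A u v (h : R) : A^T = A ->
  mxform A (u + h *: v) (u + h *: v) =
  mxform A u u + 2 * h * mxform A v u + h ^+ 2 * mxform A v v.
Proof.
move=> AT; have vuC := mxformC u v AT.
rewrite /mxform in vuC *.
rewrite [(u + _)^T]linearD /= [(h *: v)^T]linearZ /= !mulmxDl !mulmxDr.
rewrite -!scalemxAl -!scalemxAr.
move: (u^T *m A *m u) (u^T *m A *m v) (v^T *m A *m u) (v^T *m A *m v) vuC.
by move=> a b b' c baC; rewrite !mxE baC; ring.
Qed.

Variables (F : 'cV[R]_d -> R) (A : 'M[R]_d) (wstar : 'cV[R]_d).
Hypothesis qF : quadratic_obj F A wstar.

Lemma quadratic_obj_increment w v (h : R) :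
  F (h *: v + w) - F w = h * mxform A v (w - wstar) + h ^+ 2 * (2^-1 * mxform A v v).
Proof.
case: qF => AT FE.
have -> : F (h *: v + w) - F w = (F (h *: v + w) - F wstar) - (F w - F wstar).
  by rewrite opprB addrA subrK.
rewrite !FE -/(mxform _ _ _) -/(mxform _ _ _).
rewrite -addrA [h *: v + _]addrC (mxform_shift _ _ _ AT).
by field.
Qed.

Lemma derive_quadratic_obj w v : derive F w v = mxform A v (w - wstar).
Proof.
set b := mxform A v (w - wstar); set c := 2^-1 * mxform A v v.
have quotE (h : R) : h != 0 -> h^-1 *: ((F \o shift w) (h *: v) - F w) = b + h * c.
  move=> h0 /=; rewrite -[LHS]/(h^-1 * _) quadratic_obj_increment /b /c.
  by field.
rewrite /derive; apply: cvg_lim => //.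
apply: (@cvg_trans _ ((fun h => b + h * c) @ 0^')).
  by apply: near_eq_cvg; near=> h; rewrite quotE //; near: h; exact: nbhs_dnbhs_neq.
have : (fun h => b + h * c) @ 0 --> b + 0 * c.
  by apply: cvgD; [exact: cvg_cst | apply: cvgMr_tmp; exact: cvg_id].
rewrite mul0r addr0; exact: cvg_within_filter.
Unshelve. all: by end_near.
Qed.

Lemma grad_quadratic_obj w : grad F w = A *m (w - wstar).
Proof.
apply/matrixP => j k; rewrite (ord1 k) /grad mxE derive_quadratic_obj.
by rewrite /mxform trmx_delta -mulmxA -rowE mxE.
Qed.

Lemma gradB_quadratic_obj u v : grad F u - grad F v = A *m (u - v).
Proof.
by rewrite !grad_quadratic_obj -mulmxBr opprB addrA subrK.
Qed.

End quadratic_objective.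

Section sqnorm_lemmas.
Variables (R : realType) (d : nat).
Implicit Types (v : 'cV[R]_d).

Lemma sqnorm_ge0 v : 0 <= sqnorm v.
Proof. by apply: sumr_ge0 => i _; rewrite sqr_ge0. Qed.

Lemma sqnormZ (c : R) v : sqnorm (c *: v) = c ^+ 2 * sqnorm v.
Proof. by rewrite /sqnorm mulr_sumr; apply: eq_bigr => j _; rewrite mxE exprMn. Qed.

Lemma sqr_coord_le_sqnorm v k : v k ord0 ^+ 2 <= sqnorm v.
Proof.
by rewrite /sqnorm (bigD1 k) //= lerDl; apply: sumr_ge0 => j _; rewrite sqr_ge0.
Qed.

End sqnorm_lemmas.

Lemma L_smooth_quadratic_obj (R : realType) (d : nat) (F : 'cV[R]_d -> R)
    (A : 'M[R]_d) (wstar : 'cV[R]_d) (L : R) :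
  quadratic_obj F A wstar -> L_smooth F L ->
  forall y, sqnorm (A *m y) <= L ^+ 2 * sqnorm y.
Proof.
move=> qF LF y; have := LF (y + wstar) wstar.
rewrite (gradB_quadratic_obj qF) addrK => normAy_le.
rewrite -(sqr_sqrtr (sqnorm_ge0 (A *m y))) -(sqr_sqrtr (sqnorm_ge0 y)) -exprMn.
have sqrt_ge0 := sqrtr_ge0 (sqnorm (A *m y)).
by rewrite ler_sqr ?nnegrE // (le_trans sqrt_ge0 normAy_le).
Qed.

Section independent_product.
Context d (T : measurableType d) (R : realType) (P : probability T R).
Variables U V : T -> R.
Hypotheses (mU : measurable_fun setT U) (mV : measurable_fun setT V).
Hypothesis UV_indep : forall A B : set R, measurable A -> measurable B ->
  P (U @^-1` A `&` V @^-1` B) = (P (U @^-1` A) * P (V @^-1` B))%E.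
Hypotheses (UV_int : P.-integrable setT (fun t => (U t * V t)%:E))
  (V_int : P.-integrable setT (fun t => (V t)%:E)).
Hypothesis V_mean0 : (\int[P]_t (V t)%:E = 0)%E.

Let U_mfun : {mfun T >-> R} :=
  MeasurableFun.Pack (MeasurableFun.Class (isMeasurableFun.Build _ _ _ _ _ mU)).
Let V_mfun : {mfun T >-> R} :=
  MeasurableFun.Pack (MeasurableFun.Class (isMeasurableFun.Build _ _ _ _ _ mV)).
Let UV_mfun : {mfun T >-> (R * R)%type} :=
  MeasurableFun.Pack (MeasurableFun.Class
    (isMeasurableFun.Build _ _ _ _ (fun t => (U t, V t)) (measurable_fun_pair mU mV))).

Let mul_pair (z : R * R) := (z.1 * z.2)%:E.

Let measurable_mul_pair : measurable_fun [set: R * R] mul_pair.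
Proof. by apply/measurable_EFinP; apply: measurable_funM. Qed.

Let joint_lawE X : measurable X ->
  (distribution P U_mfun \x distribution P V_mfun)%E X = distribution P UV_mfun X.
Proof.
apply: product_measure_unique => A B mA mB.
by rewrite /distribution /pushforward /= -UV_indep.
Qed.

Lemma indep_integral_mul_mean0 : (\int[P]_t (U t * V t)%:E = 0)%E.
Proof.
pose mu := distribution P U_mfun; pose nu := distribution P V_mfun.
have joint_int : (distribution P UV_mfun).-integrable setT mul_pair.
  exact: integrable_pushforward.
have prod_int : (mu \x nu)%E.-integrable setT mul_pair.
  apply/integrableP; split => //.
  rewrite (eq_measure_integral (distribution P UV_mfun)); last first.
    by move=> A mA _; exact: joint_lawE.
  by case/integrableP: joint_int.
have nu_int : nu.-integrable setT (fun y => y%:E).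
  by apply: integrable_pushforward => //; exact/measurable_EFinP.
transitivity (\int[mu \x nu]_z mul_pair z)%E.
  rewrite (eq_measure_integral (distribution P UV_mfun)); last first.
    by move=> A mA _; exact: joint_lawE.
  by rewrite integral_distribution.
(* Fubini: integrating out y first leaves x * E[V] = 0. *)
rewrite -integral12_prod_meas1 // /fubini_F.
transitivity (\int[mu]_x (cst 0%E x))%E; last by rewrite integral0.
apply: eq_integral => x _ /=.
under eq_integral do rewrite /mul_pair /= EFinM.
rewrite integralZl // integral_distribution //.
by rewrite V_mean0 mule0.
Qed.

End independent_product.

Section square_integrable.
Context d (T : measurableType d) (R : realType).

Lemma integrable_mul_of_sqr (mu : {measure set T -> \bar R}) (f g : T -> R) :
  measurable_fun setT f -> measurable_fun setT g ->
  mu.-integrable setT (fun t => (f t ^+ 2)%:E) ->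
  mu.-integrable setT (fun t => (g t ^+ 2)%:E) ->
  mu.-integrable setT (fun t => (f t * g t)%:E).
Proof.
move=> mf mg f2_int g2_int.
apply: (@le_integrable _ _ _ _ _ measurableT _ (fun t => (f t ^+ 2 + g t ^+ 2)%:E)).
- by apply/measurable_EFinP; apply: measurable_funM.
- move=> t _ /=; rewrite lee_fin normrM [X in _ <= X]ger0_norm ?addr_ge0 ?sqr_ge0 //.
  rewrite -(real_normK (num_real (f t))) -(real_normK (num_real (g t))).
  have := normr_ge0 (f t); have := normr_ge0 (g t); nra.
- exact: (integrableD measurableT f2_int g2_int).
Qed.

Lemma integrable_of_sqr (mu : {finite_measure set T -> \bar R}) (f : T -> R) :
  measurable_fun setT f -> mu.-integrable setT (fun t => (f t ^+ 2)%:E) ->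
  mu.-integrable setT (fun t => (f t)%:E).
Proof.
move=> mf f2_int.
apply: (@le_integrable _ _ _ _ _ measurableT _ (fun t => (1 + f t ^+ 2)%:E)).
- exact/measurable_EFinP.
- move=> t _ /=; rewrite lee_fin [X in _ <= X]ger0_norm ?addr_ge0 ?sqr_ge0 //.
  rewrite -(real_normK (num_real (f t))); have := normr_ge0 (f t); nra.
- apply: (eq_integrable measurableT (fun t => (EFin \o cst 1) t + (f t ^+ 2)%:E)) => //.
  exact: (integrableD measurableT (finite_measure_integrable_cst _ _ measurableT)).
Qed.

Lemma integral_sqr_sum_orthogonal (mu : {measure set T -> \bar R}) (N : nat)
    (g : 'I_N -> T -> R) :
  (forall i, measurable_fun setT (g i)) ->
  (forall i, mu.-integrable setT (fun t => (g i t ^+ 2)%:E)) ->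
  (forall i j, i != j -> (\int[mu]_t (g i t * g j t)%:E = 0)%E) ->
  (\int[mu]_t ((\sum_(i < N) g i t) ^+ 2)%:E = \sum_(i < N) \int[mu]_t (g i t ^+ 2)%:E)%E.
Proof.
move=> mg g2_int orth.
have gg_int i j : mu.-integrable setT (fun t => (g i t * g j t)%:E).
  exact: integrable_mul_of_sqr.
transitivity (\int[mu]_t (\sum_(i < N) \sum_(j < N) (g i t * g j t)%:E))%E.
  apply: eq_integral => t _; rewrite expr2 mulr_suml -sumEFin.
  by apply: eq_bigr => i _; rewrite mulr_sumr -sumEFin.
rewrite integral_sum //; last by move=> i; apply: integrable_sum => // j _.
apply: eq_bigr => i _; rewrite integral_sum //.
rewrite (bigD1 i) //= big1 ?adde0; last by move=> j ji; rewrite orth // eq_sym.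
by apply: eq_integral => t _; rewrite expr2.
Qed.

End square_integrable.

Section random_vectors.
Context dT (T : measurableType dT) (R : realType) (d : nat).
Implicit Types X : T -> 'cV[R]_d.

Definition measurable_cV X := forall j, measurable_fun setT (fun t => X t j ord0).

Lemma measurable_sqnorm X : measurable_cV X -> measurable_fun setT (fun t => sqnorm (X t)).
Proof. by move=> mX; apply: measurable_sum => j; exact: measurable_funX. Qed.

Lemma measurable_cV_mulmx (M : 'M[R]_d) X :
  measurable_cV X -> measurable_cV (fun t => M *m X t).
Proof.
move=> mX j; under eq_fun do rewrite mxE.
by apply: measurable_sum => k; apply: measurable_funM.
Qed.

Lemma measurable_cV_subr X c : measurable_cV X -> measurable_cV (fun t => X t - c).
Proof. by move=> mX j; under eq_fun do rewrite !mxE; exact: measurable_funB. Qed.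

Lemma measurable_cV_sum N (X : 'I_N -> T -> 'cV[R]_d) :
  (forall i, measurable_cV (X i)) -> measurable_cV (fun t => \sum_(i < N) X i t).
Proof.
by move=> mX j; under eq_fun do rewrite summxE; apply: measurable_sum => i; exact: mX.
Qed.

End random_vectors.

Section compression_error.
Context dT (T : measurableType dT) (R : realType) (P : probability T R) (d : nat).
Variables (C : T -> 'cV[R]_d -> 'cV[R]_d) (omega : R) (x : 'cV[R]_d).
Hypothesis C_compr : compressor P C omega.

Lemma compressor_err_measurable : measurable_cV (fun t => C t x - x).
Proof. by apply: measurable_cV_subr => j; case: C_compr. Qed.

Lemma compressor_err_coord_sqr_integrable k :
  P.-integrable setT (fun t => ((C t x - x) k ord0 ^+ 2)%:E).
Proof.
have err_int : P.-integrable setT (fun t => (sqnorm (C t x - x))%:E).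
  apply/integrableP; split.
    exact/measurable_EFinP/measurable_sqnorm/compressor_err_measurable.
  under eq_integral do rewrite gee0_abs ?lee_fin ?sqnorm_ge0 //.
  by case: C_compr => _ _ /(_ x) /le_lt_trans; apply; exact: ltry.
apply: le_integrable err_int => //.
- by apply/measurable_EFinP/measurable_funX; exact: compressor_err_measurable.
- move=> t _ /=; rewrite lee_fin !ger0_norm ?sqnorm_ge0 ?sqr_ge0 //.
  exact: sqr_coord_le_sqnorm.
Qed.

Lemma compressor_err_coord_integrable k :
  P.-integrable setT (fun t => ((C t x - x) k ord0)%:E).
Proof.
apply: integrable_of_sqr; last exact: compressor_err_coord_sqr_integrable.
exact: compressor_err_measurable.
Qed.

Lemma compressor_err_coord_mean0 k : (\int[P]_t ((C t x - x) k ord0)%:E = 0)%E.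
Proof.
have cst_int := finite_measure_integrable_cst P (x k ord0) measurableT.
have C_int : P.-integrable setT (fun t => (C t x k ord0)%:E).
  apply: (eq_integrable measurableT
    (fun t => ((C t x - x) k ord0)%:E + (EFin \o cst (x k ord0)) t)) => //.
    by move=> t _ /=; rewrite !mxE -EFinD subrK.
  exact: integrableD (compressor_err_coord_integrable k) cst_int.
under eq_integral do rewrite !mxE EFinB.
rewrite (integralB measurableT C_int cst_int).
case: C_compr => _ -> _.
rewrite (_ : EFin \o cst (x k ord0) = cst (x k ord0)%:E) //.
rewrite integral_cst //; set PT := (X in (_ * X)%E).
have -> : PT = 1%E by exact: probability_setT.
by rewrite mule1 subee.
Qed.

End compression_error.

Lemma indep_vecs_coord (R : realType) (dT : measure_display) (T : measurableType dT)
    (P : probability T R) (N d : nat) (X : 'I_N -> T -> 'cV[R]_d) i j k (A B : set R) :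
  indep_vecs P X -> i != j -> measurable A -> measurable B ->
  P ((fun t => X i t k ord0) @^-1` A `&` (fun t => X j t k ord0) @^-1` B) =
  (P ((fun t => X i t k ord0) @^-1` A) * P ((fun t => X j t k ord0) @^-1` B))%E.
Proof.
move=> X_indep ij mA mB; have ji : j != i by rewrite eq_sym.
pose Bs i' j' := if j' == k then (if i' == i then A else if i' == j then B else setT)
                 else setT.
have mBs i' j' : measurable (Bs i' j').
  by rewrite /Bs; case: ifP => // _; case: ifP => // _; case: ifP.
have cylE i' : [set t | forall j', Bs i' j' (X i' t j' ord0)] =
               (fun t => X i' t k ord0) @^-1` Bs i' k.
  apply/seteqP; split => t /=; first exact.
  by move=> Xt j'; rewrite /Bs; case: eqP => [->|//]; move: Xt; rewrite /Bs eqxx.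
have := X_indep [set i; j]%SET Bs mBs.
rewrite big_setU1 ?big_set1 /= ?inE //= !cylE /Bs !eqxx (negbTE ji).
move=> <-; congr (P _); apply/seteqP; split => t /=.
- move=> [XiA XjB] i'; rewrite /= !inE => /orP[] /eqP -> j'; case: eqP => [->|//].
    by rewrite eqxx.
  by rewrite (negbTE ji) eqxx.
- move=> Xt; split.
  + by have := Xt i; rewrite cylE /= /Bs !eqxx; apply; rewrite /= !inE eqxx.
  + have := Xt j; rewrite cylE /= /Bs !eqxx (negbTE ji); apply.
    by rewrite /= !inE eqxx orbT.
Qed.

Section independent_compressions.
Context dT (T : measurableType dT) (R : realType) (P : probability T R) (d N : nat).
Variables (C : 'I_N -> T -> 'cV[R]_d -> 'cV[R]_d) (omega : R) (x : 'I_N -> 'cV[R]_d).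
Hypotheses (C_compr : forall i, compressor P (C i) omega)
  (C_indep : indep_compressors P C).

Let err i t := C i t (x i) - x i.

Let err_measurable i : measurable_cV (err i).
Proof. exact: compressor_err_measurable. Qed.

Lemma indep_compressors_err_orthogonal i j k : i != j ->
  (\int[P]_t (err i t k ord0 * err j t k ord0)%:E = 0)%E.
Proof.
move=> ij.
have errE i' (A : set R) : (fun t => err i' t k ord0) @^-1` A =
    (fun t => C i' t (x i') k ord0) @^-1` [set r | A (r - x i' k ord0)].
  by apply/seteqP; split => t; rewrite /= !mxE.
have shift_measurable (c : R) (A : set R) : measurable A -> measurable [set r | A (r - c)].
  move=> mA; have mBc : measurable_fun setT (fun r : R => r - c).
    by apply: measurable_funB => //; exact: measurable_cst.
  by have := mBc measurableT _ mA; rewrite setTI.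
apply: indep_integral_mul_mean0; try exact: err_measurable.
- move=> A B mA mB; rewrite !errE.
  by apply: (indep_vecs_coord k (C_indep x) ij); exact: shift_measurable.
- apply: integrable_mul_of_sqr; try exact: err_measurable.
    exact: compressor_err_coord_sqr_integrable _ (C_compr i) k.
  exact: compressor_err_coord_sqr_integrable _ (C_compr j) k.
- exact: compressor_err_coord_integrable _ (C_compr j) k.
- exact: compressor_err_coord_mean0 _ (C_compr j) k.
Qed.

Lemma indep_compressors_sum_err_le :
  (\int[P]_t (sqnorm (\sum_(i < N) err i t))%:E <=
   (\sum_(i < N) omega * sqnorm (x i))%:E)%E.
Proof.
have coord_sqr_measurable (X : T -> 'cV[R]_d) k : measurable_cV X ->
    measurable_fun setT (fun t => (X t k ord0 ^+ 2)%:E).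
  by move=> mX; apply/measurable_EFinP/measurable_funX.
have integral_sqnormE (X : T -> 'cV[R]_d) : measurable_cV X ->
    (\int[P]_t (sqnorm (X t))%:E = \sum_(k < d) \int[P]_t (X t k ord0 ^+ 2)%:E)%E.
  move=> mX; under eq_integral do rewrite -sumEFin.
  rewrite ge0_integral_sum // => [k|k t _]; first exact: coord_sqr_measurable.
  by rewrite lee_fin sqr_ge0.
have pythagoras k : (\int[P]_t ((\sum_(i < N) err i t) k ord0 ^+ 2)%:E =
    \sum_(i < N) \int[P]_t (err i t k ord0 ^+ 2)%:E)%E.
  under eq_integral do rewrite summxE.
  apply: integral_sqr_sum_orthogonal => [i|i|i j]; first exact: err_measurable.
    exact: compressor_err_coord_sqr_integrable _ (C_compr i) k.
  exact: indep_compressors_err_orthogonal.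
rewrite integral_sqnormE; last exact: measurable_cV_sum.
under eq_bigr do rewrite pythagoras.
rewrite exchange_big /= -sumEFin; apply: lee_sum => i _.
rewrite -integral_sqnormE //.
by case: (C_compr i) => _ _ ->.
Qed.

End independent_compressions.

Lemma scaler_avg_cst (K : numFieldType) (V : lmodType K) (N : nat) (v : V) :
  (0 < N)%N -> N%:R^-1 *: \sum_(i < N) v = v.
Proof.
move=> N_gt0; rewrite sumr_const card_ord -[v *+ N]scaler_nat scalerA mulVf ?scale1r //.
by rewrite pnatr_eq0 -lt0n.
Qed.

Lemma mulr_avg_cst (K : numFieldType) (N : nat) (x : K) :
  (0 < N)%N -> N%:R^-1 * \sum_(i < N) x = x.
Proof.
move=> N_gt0; rewrite sumr_const card_ord -[x *+ N]mulr_natl mulrA mulVf ?mul1r //.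
by rewrite pnatr_eq0 -lt0n.
Qed.

Lemma integral_sqnorm_mulmx_le dT (T : measurableType dT) (R : realType)
    (mu : {measure set T -> \bar R}) (d : nat) (M : 'M[R]_d) (K : R) (X : T -> 'cV[R]_d) :
  measurable_cV X -> 0 <= K -> (forall y, sqnorm (M *m y) <= K * sqnorm y) ->
  (\int[mu]_t (sqnorm (M *m X t))%:E <= K%:E * \int[mu]_t (sqnorm (X t))%:E)%E.
Proof.
move=> mX K_ge0 M_le.
have mMX : measurable_fun setT (fun t => (sqnorm (M *m X t))%:E).
  exact/measurable_EFinP/measurable_sqnorm/measurable_cV_mulmx.
have mX2 : measurable_fun setT (fun t => (sqnorm (X t))%:E).
  exact/measurable_EFinP/measurable_sqnorm.
rewrite -ge0_integralZl //; last by move=> t _; rewrite lee_fin sqnorm_ge0.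
apply: ge0_le_integral => //.
- by move=> t _; rewrite lee_fin sqnorm_ge0.
- exact: emeasurable_funM.
- by move=> t _; rewrite -EFinM lee_fin.
Qed.

Section downlink_error.
Context dT (T : measurableType dT) (R : realType) (P : probability T R) (d N : nat).
Variables (F : 'cV[R]_d -> R) (A : 'M[R]_d) (wstar : 'cV[R]_d) (L omega : R).
Hypotheses (qF : quadratic_obj F A wstar) (LF : L_smooth F L).

Let grad_err (H : 'cV[R]_d) c w :
  grad F (H + c) - grad F w = A *m (c - (w - H)).
Proof.
by rewrite (gradB_quadratic_obj qF) opprB addrA [H + c]addrC.
Qed.

Lemma shared_downlink_error_le (C : T -> 'cV[R]_d -> 'cV[R]_d) (w H : 'cV[R]_d) :
  compressor P C omega ->
  (\int[P]_t (sqnorm (grad F (H + C t (w - H)) - grad F w))%:E <=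
   (L ^+ 2 * omega * sqnorm (w - H))%:E)%E.
Proof.
move=> C_compr; under eq_integral do rewrite grad_err.
apply: le_trans (integral_sqnorm_mulmx_le _ _ _ (L_smooth_quadratic_obj qF LF)) _.
- exact: compressor_err_measurable C_compr.
- exact: sqr_ge0.
rewrite -mulrA (EFinM (L ^+ 2)); apply: lee_wpmul2l; first by rewrite lee_fin sqr_ge0.
by case: C_compr => _ _ ->.
Qed.

Lemma independent_downlink_error_le (C : 'I_N -> T -> 'cV[R]_d -> 'cV[R]_d)
    (w : 'cV[R]_d) (H : 'I_N -> 'cV[R]_d) :
  (0 < N)%N -> (forall i, compressor P (C i) omega) -> indep_compressors P C ->
  (\int[P]_t (sqnorm (N%:R^-1 *: \sum_(i < N) grad F (H i + C i t (w - H i))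
                      - grad F w))%:E <=
   (L ^+ 2 * omega / N%:R ^+ 2 * \sum_(i < N) sqnorm (w - H i))%:E)%E.
Proof.
move=> N_gt0 C_compr C_indep; set x := fun i => w - H i.
have errE t : N%:R^-1 *: \sum_(i < N) grad F (H i + C i t (x i)) - grad F w =
    (N%:R^-1 *: A) *m \sum_(i < N) (C i t (x i) - x i).
  rewrite -[X in _ - X = _](scaler_avg_cst _ N_gt0) -scalerBr -sumrB -scalemxAl.
  by rewrite mulmx_sumr; congr (_ *: _); apply: eq_bigr => i _; rewrite grad_err.
under eq_integral do rewrite errE.
have scaled_le y : sqnorm ((N%:R^-1 *: A) *m y) <= N%:R^-1 ^+ 2 * L ^+ 2 * sqnorm y.
  rewrite -scalemxAl sqnormZ -mulrA ler_wpM2l ?sqr_ge0 //.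
  exact: (L_smooth_quadratic_obj qF LF).
apply: le_trans (integral_sqnorm_mulmx_le _ _ _ scaled_le) _.
- by apply: measurable_cV_sum => i; exact: compressor_err_measurable (C_compr i).
- by rewrite mulr_ge0 ?sqr_ge0.
apply: le_trans (lee_wpmul2l _ (indep_compressors_sum_err_le x C_compr C_indep)) _.
  by rewrite lee_fin mulr_ge0 ?sqr_ge0.
rewrite -EFinM lee_fin -mulr_sumr le_eqVlt; apply/orP; left; apply/eqP.
by field; rewrite pnatr_eq0 -lt0n.
Qed.

End downlink_error.

Unset Implicit Arguments.

Theorem mainTheorem10 (R : realType) (dT : measure_display) (T : measurableType dT)
  (P : probability T R) (d N : nat) (F : 'cV[R]_d -> R) (A : 'M[R]_d)
  (wstar : 'cV[R]_d) (L omega_dwn : R) :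
  (1 <= N)%N -> 0 < omega_dwn ->
  quadratic_obj F A wstar -> L_smooth F L ->
  (* MCM (C = 1): one shared memory H and one shared downlink compression *)
  (forall (Cdwn : T -> 'cV[R]_d -> 'cV[R]_d),
     compressor P Cdwn omega_dwn ->
     forall (w_prev H_prev : 'cV[R]_d),
       let what := fun t => H_prev + Cdwn t (w_prev - H_prev) in
       (\int[P]_t (sqnorm (N%:R^-1 *: (\sum_(i < N) grad F (what t))
                            - grad F w_prev))%:E
        <= ((L ^+ 2 * omega_dwn / 1) *
            (N%:R^-1 * \sum_(i < N) sqnorm (w_prev - H_prev)))%:E)%E) /\
  (* Rand-MCM (C = N): per-worker memories H^i, independent compressions *)
  (forall (Cdwn : 'I_N -> T -> 'cV[R]_d -> 'cV[R]_d),
     (forall i, compressor P (Cdwn i) omega_dwn) ->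
     indep_compressors P Cdwn ->
     forall (w_prev : 'cV[R]_d) (H_prev : 'I_N -> 'cV[R]_d),
       let what := fun i t => H_prev i + Cdwn i t (w_prev - H_prev i) in
       (\int[P]_t (sqnorm (N%:R^-1 *: (\sum_(i < N) grad F (what i t))
                            - grad F w_prev))%:E
        <= ((L ^+ 2 * omega_dwn / N%:R) *
            (N%:R^-1 * \sum_(i < N) sqnorm (w_prev - H_prev i)))%:E)%E).
Proof.
move=> N_gt0 _ qF LF; split.
- move=> C C_compr w H; cbv zeta.
  rewrite divr1 mulr_avg_cst //.
  under eq_integral do rewrite scaler_avg_cst //.
  exact: shared_downlink_error_le qF LF _ _ _ C_compr.
- move=> C C_compr C_indep w H; cbv zeta.
  have -> : L ^+ 2 * omega_dwn / N%:R * (N%:R^-1 * \sum_(i < N) sqnorm (w - H i)) =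
            L ^+ 2 * omega_dwn / N%:R ^+ 2 * \sum_(i < N) sqnorm (w - H i).
    by rewrite expr2 invfM !mulrA.
  exact: independent_downlink_error_le qF LF _ _ _ N_gt0 C_compr C_indep.
Qed.
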